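(* Let $X,X_1,X_2,\dots$ be i.i.d. real random variables with $EX=0$ and $E|X|^{2+\varepsilon}<\infty$ for some $\varepsilon>0$. Let $\mu>0$, $m\ge1$, $\delta\in(0,1/2]$ and $\alpha$ satisfy $2<\alpha\le(2+\varepsilon)(1-\delta)$, and assume $$\frac{6\cdot 2^{\alpha}}{(\alpha-1)(m+1)^{\alpha-1}\mu}\,E\big[(X^+)^{2+\varepsilon}\big]\le1.$$ Let $n_k=2^{k-1}$ for $k\ge1$, $\bar G(t)=\int_t^\infty (1+s)^{-\alpha}\,ds$, and $$g(k)=\frac{\bar G(m+\mu n_{k-1})-\bar G(m+\mu n_k)}{\bar G(m+\mu n_1)},\qquad k\ge2,$$ and $A_k=\bigcup_{j=n_{k-1}}^{n_k-1}\{X_j>(\mu j+m)^{1-\delta}\}$. Then $$\frac{3P(A_k)}{g(k)}\le1\qquad\text{for all }k\ge2.$$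
   Context: $X^+=\max(X,0)$. $g$ is a probability mass function on $\{2,3,\dots\}$ (it is the law of the dyadic block containing a level associated with a Pareto random variable $Y$ with $P(Y>y)=(1+y)^{-\alpha}$, $y\ge0$). *)

From HB Require Import structures.
From mathcomp Require Import all_boot all_order all_algebra.
From mathcomp Require Import all_classical all_reals all_analysis.
Set Implicit Arguments. Unset Strict Implicit. Unset Printing Implicit Defensive.
Import Order.TTheory GRing.Theory Num.Theory.
Local Open Scope classical_set_scope.
Local Open Scope ring_scope.

Definition mutually_independent_RVs (R : realType) (d : measure_display)
  (T : measurableType d) (P : probability T R) (X : nat -> {RV P >-> R}) : Prop :=
  forall (I : seq nat) (B : nat -> set R), uniq I ->
    (forall i, measurable (B i)) ->
    P (\bigcap_(i in [set` I]) (X i @^-1` B i)) =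
    (\prod_(i <- I) P (X i @^-1` B i))%E.

Definition identically_distributed (R : realType) (d : measure_display)
  (T : measurableType d) (P : probability T R) (X : nat -> {RV P >-> R}) : Prop :=
  forall i (B : set R), measurable B -> P (X i @^-1` B) = P (X 0%N @^-1` B).

Definition iid_seq (R : realType) (d : measure_display)
  (T : measurableType d) (P : probability T R) (X : nat -> {RV P >-> R}) : Prop :=
  identically_distributed X /\ mutually_independent_RVs X.

Definition nk (k : nat) : nat := (2 ^ k.-1)%N.

Definition Gbar (R : realType) (alpha t : R) : R :=
  fine (\int[lebesgue_measure]_(s in `[t, +oo[%classic) ((1 + s) `^ (- alpha))%:E)%E.

Definition gk (R : realType) (alpha mu m : R) (k : nat) : R :=
  (Gbar alpha (m + mu * (nk k.-1)%:R) - Gbar alpha (m + mu * (nk k)%:R))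
   / Gbar alpha (m + mu * (nk 1)%:R).

Definition Ak (R : realType) (d : measure_display) (T : measurableType d)
  (P : probability T R) (X : nat -> {RV P >-> R}) (mu m delta : R) (k : nat)
  : set T :=
  \bigcup_(j in [set j : nat | (nk k.-1 <= j < nk k)%N])
     [set w | (mu * j%:R + m) `^ (1 - delta) < X j w].

Definition pospart (R : realType) (x : R) : R := Num.max x 0.

(* Since [Gbar t = (1 + t)^(1 - alpha) / (alpha - 1)], convexity of
   [t |-> t^(1 - alpha)] gives the lower bound
   [g k >= (alpha - 1) (m + 1)^(alpha - 1) mu n / (2^alpha (mu n + m)^alpha)]
   with [n = n_(k-1)], because [1 + m + mu n_k <= 2 (mu n + m)].  On the other
   side, a union bound over the [n] indices of the block, Markov's inequality
   for [(X^+)^(2 + eps)] and [(mu j + m)^((1 - delta)(2 + eps)) >= (mu n + m)^alpha]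
   give [P(A_k) <= n E[(X^+)^(2 + eps)] / (mu n + m)^alpha].  The hypothesis on
   [E[(X^+)^(2 + eps)]] then yields [3 P(A_k) <= g k / 2]. *)

From HB Require Import structures.
From mathcomp Require Import all_boot all_order all_algebra.
From mathcomp Require Import all_classical all_reals all_analysis.
From mathcomp.algebra_tactics Require Import ring lra.
Set Implicit Arguments. Unset Strict Implicit. Unset Printing Implicit Defensive.
Import Order.TTheory GRing.Theory Num.Theory.
Local Open Scope classical_set_scope.
Local Open Scope ring_scope.

Section Gbar.
Variable R : realType.

Lemma powR1D_cvgy0 (b : R) : 0 < b -> (1 + x) `^ (- b) @[x --> +oo] --> 0.
Proof.
move=> b0.
have ln_cvgy : b * ln (1 + x) @[x --> +oo] --> +oo.
  apply/cvgryPge => A; near=> x.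
  have x0 : 0 < x by near: x; apply: nbhs_pinfty_gt; rewrite num_real.
  have xA : expR (A / b) <= x by near: x; apply: nbhs_pinfty_ge; rewrite num_real.
  rewrite -ler_pdivrMl // mulrC -(expRK (A / b)).
  by rewrite ler_ln ?posrE ?expR_gt0 ?addr_gt0 // (le_trans xA) // lerDr.
apply: (@cvg_trans _ (expR (- (b * ln (1 + x))) @[x --> +oo])); last first.
  exact: cvg_comp ln_cvgy (@cvgr_expR R).
apply: near_eq_cvg; near=> x.
have x0 : 0 < 1 + x.
  by apply: addr_gt0 => //; near: x; apply: nbhs_pinfty_gt; rewrite num_real.
by rewrite /powR gt_eqF // mulNr.
Unshelve. all: end_near. Qed.

Lemma is_derive_powR1D (b x : R) : -1 < x ->
  is_derive x 1 (fun y => (1 + y) `^ b) (b * (1 + x) `^ (b - 1)).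
Proof.
move=> x1; have x0 : 0 < 1 + x by rewrite -ltrBlDl sub0r.
have -> : (fun y => (1 + y) `^ b) = (@powR R ^~ b) \o (fun y => 1 + y) by [].
have dD : derivable (fun y : R => 1 + y) x 1 by [].
have dpow : derivable (@powR R ^~ b) (1 + x) 1.
  by apply: derivable_powR; rewrite in_itv /= andbT.
split.
  by apply/derivable1_diffP; apply: differentiable_comp; apply/derivable1_diffP.
rewrite -derive1E derive1_comp // powR_derive1 ?in_itv /= ?andbT //.
by rewrite derive1E derive_val add0r !mulr1.
Qed.

Lemma GbarE (al t : R) : 1 < al -> 0 <= t ->
  Gbar al t = (1 + t) `^ (1 - al) / (al - 1).
Proof.
move=> al1 t0; have al10 : 0 < al - 1 by rewrite subr_gt0.
have gt_1 x : t <= x -> -1 < x.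
  by move=> tx; apply: lt_le_trans (le_trans t0 tx); rewrite ltrN10.
pose r := - (al - 1)^-1.
pose F s := (1 + s) `^ (1 - al) * r.
have dF x : t <= x -> derivable F x 1.
  move=> tx; have [dpow _] := is_derive_powR1D (1 - al) (gt_1 x tx).
  exact: derivableM dpow (derivable_cst r x 1).
rewrite /Gbar (@ge0_continuous_FTC2y _ (fun s => (1 + s) `^ (- al)) F t 0).
- by rewrite /= sub0r /F mulrN opprK.
- by move=> x _; apply: powR_ge0.
- apply: derivable_within_continuous => x; rewrite in_itv /= andbT => tx.
  by have [] := is_derive_powR1D (- al) (gt_1 x tx).
- rewrite -(mul0r r); apply: (@cvgMr_tmp _ _ _ _ (fun x => (1 + x) `^ (1 - al))).
  by rewrite -opprB; apply: powR1D_cvgy0.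
- by move=> x /ltW; apply: dF.
- have /derivable1_diffP dFt := dF t (lexx t).
  exact: cvg_at_right_filter (differentiable_continuous dFt).
- move=> x; rewrite in_itv /= andbT => /ltW tx.
  have [dpow dE] := is_derive_powR1D (1 - al) (gt_1 x tx).
  rewrite /F (@derive1Mr _ (fun y => (1 + y) `^ (1 - al))) // derive1E dE.
  rewrite (_ : 1 - al - 1 = - al); last by ring.
  by rewrite /r; field; rewrite gt_eqF.
Qed.

Lemma powR_ge1Dsub (r s : R) : 0 < r -> s <= 0 -> 1 + s * (r - 1) <= r `^ s.
Proof.
move=> r0 s0; rewrite /powR gt_eqF //; apply: le_trans (expR_ge1Dx _).
rewrite lerD2l ler_wnM2l //.
by have := @le_ln1Dx _ (r - 1); rewrite addrCA subrr addr0; apply; lra.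
Qed.

Lemma powR_sub_ge (x y al : R) : 0 < x -> x <= y -> 1 < al ->
  (al - 1) * (y - x) * y `^ (- al) <= x `^ (1 - al) - y `^ (1 - al).
Proof.
move=> x0 xy al1; have y0 : 0 < y := lt_le_trans x0 xy.
have yE : x = x / y * y by rewrite mulfVK ?gt_eqF.
have xE : x `^ (1 - al) = (x / y) `^ (1 - al) * y `^ (1 - al).
  by rewrite {1}yE powRM // ltW // divr_gt0.
have yalE : y `^ (- al) = y `^ (1 - al) / y.
  rewrite [in LHS](_ : - al = (1 - al) - 1); last by ring.
  rewrite [LHS]powRB ?powRr1 ?(ltW y0) //.
  by apply/implyP => _; apply: lt0r_neq0.
have bern : 1 + (1 - al) * (x / y - 1) <= (x / y) `^ (1 - al).
  by apply: powR_ge1Dsub; [apply: divr_gt0 | lra].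
have ypos : 0 < y `^ (1 - al) by apply: powR_gt0.
rewrite xE yalE.
rewrite (_ : (al - 1) * (y - x) * (y `^ (1 - al) / y) =
  ((al - 1) * (1 - x / y)) * y `^ (1 - al)); last by field; rewrite gt_eqF.
rewrite (_ : (x / y) `^ (1 - al) * y `^ (1 - al) - y `^ (1 - al) =
  ((x / y) `^ (1 - al) - 1) * y `^ (1 - al)); last by ring.
rewrite ler_pM2r //; lra.
Qed.

Lemma Gbar_sub_ge (al a b : R) : 1 < al -> 0 <= a -> a <= b ->
  (b - a) * (1 + b) `^ (- al) <= Gbar al a - Gbar al b.
Proof.
move=> al1 a0 ab; have al10 : 0 < al - 1 by rewrite subr_gt0.
rewrite !GbarE ?(le_trans a0) // -mulrBl ler_pdivlMr // mulrC mulrA.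
rewrite (_ : b - a = (1 + b) - (1 + a)); last by ring.
by apply: powR_sub_ge; rewrite ?ltr_pwDl ?lerD2l.
Qed.

End Gbar.

Lemma nk_double_pred (k : nat) : (2 <= k)%N -> nk k = (2 * nk k.-1)%N.
Proof. by case: k => [|[|k]] //= _; rewrite /nk /= expnS. Qed.

Lemma gk_ge (R : realType) (al mu m : R) (k : nat) :
  1 < al -> 0 < mu -> 1 <= m -> (2 <= k)%N ->
  (al - 1) * (m + 1) `^ (al - 1) * mu * (nk k.-1)%:R
    / (2 `^ al * (mu * (nk k.-1)%:R + m) `^ al) <= gk al mu m k.
Proof.
move=> al1 mu0 m1 k2; have al10 : 0 < al - 1 by rewrite subr_gt0.
have m0 : 0 < m := lt_le_trans ltr01 m1.
rewrite /gk (nk_double_pred k2) natrM (_ : (nk 1)%:R = 1 :> R) // mulr1.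
set n := (nk k.-1)%:R; have n0 : 0 < n by rewrite ltr0n expn_gt0.
have Gm_inv : (al - 1) * (m + 1) `^ (al - 1) <= (Gbar al (m + mu))^-1.
  have mmu0 : 0 <= m + mu by rewrite addr_ge0 ?ltW.
  rewrite GbarE // invf_div -[1 - al]opprB powRN invrK.
  rewrite ler_pM2l //; apply: ge0_ler_powR; rewrite ?nnegrE ?ltW //.
  - by rewrite addr_gt0.
  - by rewrite !addr_gt0.
  - by lra.
have A0 : 0 < mu * n + m by rewrite addr_gt0 ?mulr_gt0.
have b0 : 0 < 1 + (m + mu * (2%:R * n)) by rewrite !addr_gt0 ?mulr_gt0.
have Gdiff : mu * n / (2 `^ al * (mu * n + m) `^ al)
    <= Gbar al (m + mu * n) - Gbar al (m + mu * (2%:R * n)).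
  apply: (le_trans _ (Gbar_sub_ge al1 _ _)).
  2: by rewrite addr_ge0 ?mulr_ge0 ?(ltW m0) ?(ltW mu0) ?(ltW n0).
  2: by rewrite lerD2l ler_pM2l // ler_peMl ?ler1n // ltW.
  rewrite (_ : m + mu * (2%:R * n) - (m + mu * n) = mu * n); last by ring.
  rewrite ler_pM2l ?mulr_gt0 // powRN lef_pV2 ?posrE ?mulr_gt0 ?powR_gt0 //.
  rewrite -powRM ?(ltW A0) //; apply: ge0_ler_powR; rewrite ?nnegrE ?(ltW b0) //.
  - exact: ltW (lt_trans ltr01 al1).
  - by rewrite mulr_ge0 ?(ltW A0).
  - by lra.
set C := (al - 1) * _; set D := 2 `^ al * _.
rewrite (_ : C * mu * n / D = (mu * n / D) * C); last by ring.
apply: ler_pM Gdiff Gm_inv; last by rewrite mulr_ge0 ?powR_ge0 ?ltW.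
by rewrite divr_ge0 ?mulr_ge0 ?powR_ge0 ?ltW.
Qed.

Lemma ge0_fine_le (R : realType) (x : \bar R) (y : R) :
  (0 <= x)%E -> (x <= y%:E)%E -> fine x <= y.
Proof. by case: x => [r| |] //= _; rewrite lee_fin. Qed.

Lemma ge0_pmule_le1 (R : realType) (c : R) (x : \bar R) :
  0 < c -> (0 <= x)%E -> (c%:E * x <= 1)%E ->
  exists r, x = r%:E /\ (0 <= r /\ c * r <= 1).
Proof.
move=> c0; case: x => [r| |] // r0; last by rewrite gt0_muley ?lte_fin // leye_eq.
by rewrite -EFinM !lee_fin in r0 * => cr1; exists r.
Qed.

Section Block.
Context (R : realType) (d : measure_display) (T : measurableType d).
Variable P : probability T R.

Lemma measurable_pospart_powR (Y : {RV P >-> R}) (p : R) :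
  measurable_fun setT (fun w => pospart (Y w) `^ p).
Proof.
apply: measurableT_comp (measurable_realfun.measurable_powR p) _.
exact: (measurable_realfun.measurable_maxr (f := Y) (g := cst 0)).
Qed.

Lemma expectation_pospart_powR_ge0 (Y : {RV P >-> R}) (p : R) :
  (0 <= 'E_P[(fun w => pospart (Y w) `^ p)%R])%E.
Proof. by rewrite unlock; apply: integral_ge0 => w _; rewrite lee_fin powR_ge0. Qed.

Lemma markov_pospart_powR (Y : {RV P >-> R}) (c p : R) : 0 < c -> 0 <= p ->
  ((c `^ p)%:E * P [set w | (c < Y w)%R] <= 'E_P[(fun w => pospart (Y w) `^ p)%R])%E.
Proof.
move=> c0 p0.
have mS : measurable [set w | c < Y w].
  by rewrite -preimage_itvoy; apply: measurable_funPTI; apply: measurable_itv.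
have mpos := measurable_pospart_powR Y p.
rewrite unlock -integral_cst //.
apply: (@le_trans _ _ (\int[P]_(w in [set w | (c < Y w)%R]) ((pospart (Y w) `^ p)%R)%:E)%E).
  apply: ge0_le_integral => //.
  - by move=> w _; rewrite lee_fin powR_ge0.
  - exact/measurable_realfun.measurable_EFinP/(measurable_funS _ _ mpos).
  - move=> w /= cw; have Yw0 : 0 < Y w := lt_trans c0 cw.
    rewrite lee_fin /pospart (max_idPl (ltW Yw0)).
    by apply: ge0_ler_powR => //; rewrite ?nnegrE ltW.
apply: ge0_subset_integral => //.
- exact/measurable_realfun.measurable_EFinP.
- by move=> w _; rewrite lee_fin powR_ge0.
Qed.

Lemma Ak_bigsetU (X : nat -> {RV P >-> R}) (mu m delta : R) (k : nat) :
  (2 <= k)%N ->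
  let n := nk k.-1 in
  Ak X mu m delta k = \big[setU/set0]_(i < n)
    [set w | (mu * (n + i)%N%:R + m) `^ (1 - delta) < X (n + i)%N w].
Proof.
move=> k2 n.
rewrite -(bigcup_mkord n (fun i =>
  [set w | (mu * (n + i)%N%:R + m) `^ (1 - delta) < X (n + i)%N w])).
apply/seteqP; split => w /=.
- move=> [j /= /andP[nj jk] Xj]; exists (j - n)%N; last by rewrite /= subnKC.
  by rewrite /= ltn_subLR // addnn -mul2n -nk_double_pred.
- move=> [i /= ni Xi]; exists (n + i)%N => //=.
  by rewrite leq_addr /= nk_double_pred // mul2n -addnn ltn_add2l.
Qed.

Lemma prob_Ak_le (X : nat -> {RV P >-> R}) (eps mu m delta alpha E : R) (k : nat) :
  identically_distributed X -> 0 < eps -> 0 < mu -> 1 <= m ->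
  0 <= alpha -> alpha <= (2 + eps) * (1 - delta) ->
  ('E_P[(fun w => pospart (X 0%N w) `^ (2 + eps))%R] = E%:E)%E -> (2 <= k)%N ->
  fine (P (Ak X mu m delta k)) <=
    (nk k.-1)%:R * E / (mu * (nk k.-1)%:R + m) `^ alpha.
Proof.
move=> Xid eps0 mu0 m1 al0 al_le EE k2.
set n := nk k.-1.
have base_ge1 (j : nat) : 1 <= mu * j%:R + m.
  by apply: le_trans m1 _; rewrite lerDr mulr_ge0 ?(ltW mu0).
have base_gt0 (j : nat) : 0 < mu * j%:R + m := lt_le_trans ltr01 (base_ge1 j).
pose c (j : nat) := (mu * j%:R + m) `^ (1 - delta).
have c0 j : 0 < c j by apply: powR_gt0.
have E0 : 0 <= E by rewrite -lee_fin -EE expectation_pospart_powR_ge0.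
have term_le (j : nat) : (n <= j)%N ->
    (P [set w | (c j < X j w)%R] <= (E / (mu * n%:R + m) `^ alpha)%:E)%E.
  move=> nj; have cp0 : 0 < c j `^ (2 + eps) by apply: powR_gt0.
  rewrite -preimage_itvoy Xid ?measurable_itv // preimage_itvoy.
  apply: le_trans (_ : (((c j `^ (2 + eps))^-1)%:E * E%:E <= _)%E).
    rewrite lee_pdivlMl // -EE.
    by apply: markov_pospart_powR; rewrite ?addr_ge0 ?ltW.
  rewrite -EFinM lee_fin mulrC ler_wpM2l // lef_pV2 ?posrE ?powR_gt0 //.
  apply: le_trans (_ : (mu * j%:R + m) `^ alpha <= _).
    apply: ge0_ler_powR => //; rewrite ?nnegrE ?(ltW (base_gt0 _)) //.
    by rewrite lerD2r ler_pM2l // ler_nat.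
  by rewrite /c -powRrM; apply: ler_powR; rewrite // mulrC.
have AkE := Ak_bigsetU X mu m delta k2.
have mF (i : nat) : measurable [set w | c (n + i)%N < X (n + i)%N w].
  by rewrite -preimage_itvoy; apply: measurable_funPTI; apply: measurable_itv.
apply: ge0_fine_le => //; rewrite AkE -/n.
change (P (\big[setU/set0]_(i < n) [set w | (c (n + i)%N < X (n + i)%N w)%R])
  <= (n%:R * E / (mu * n%:R + m) `^ alpha)%:E)%E.
apply: le_trans (Boole_inequality _ (fun i _ => mF i)) _.
apply: (@le_trans _ _ (\sum_(i < n) (E / (mu * n%:R + m) `^ alpha)%:E)%E).
  by apply: lee_sum => i _; apply: term_le; rewrite leq_addr.
by rewrite sumEFin sumr_const card_ord lee_fin -[X in X <= _]mulr_natl mulrA.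
Qed.

End Block.

Theorem lemma1 (R : realType) (d : measure_display) (T : measurableType d)
  (P : probability T R) (X : nat -> {RV P >-> R}) (eps mu m delta alpha : R) :
  iid_seq X ->
  0 < eps ->
  ('E_P[X 0%N] = 0)%E ->
  ('E_P[(fun w => `|X 0%N w| `^ (2 + eps))%R] < +oo)%E ->
  0 < mu -> 1 <= m -> 0 < delta -> delta <= 2^-1 ->
  2 < alpha -> alpha <= (2 + eps) * (1 - delta) ->
  ((6 * 2 `^ alpha / ((alpha - 1) * (m + 1) `^ (alpha - 1) * mu))%:E
     * 'E_P[(fun w => pospart (X 0%N w) `^ (2 + eps))%R] <= 1)%E ->
  forall k : nat, (2 <= k)%N ->
    3 * fine (P (Ak X mu m delta k)) / gk alpha mu m k <= 1.
Proof.
move=> [Xid _] eps0 _ _ mu0 m1 _ _ al2 al_le moment_le k k2.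
have al1 : 1 < alpha by apply: lt_trans al2; rewrite ltr1n.
set C := (alpha - 1) * (m + 1) `^ (alpha - 1) * mu in moment_le *.
have m0 : 0 < m := lt_le_trans ltr01 m1.
have C0 : 0 < C by rewrite !mulr_gt0 ?subr_gt0 // powR_gt0 // addr_gt0.
have coef0 : 0 < 6 * 2 `^ alpha / C by rewrite divr_gt0 // mulr_gt0 // powR_gt0.
have [E [EE [E0 moment_le']]] :=
  ge0_pmule_le1 coef0 (expectation_pospart_powR_ge0 (X 0%N) (2 + eps)) moment_le.
rewrite mulrAC ler_pdivrMr // mul1r in moment_le'.
have PAk := prob_Ak_le Xid eps0 mu0 m1 (ltW (lt_trans ltr01 al1)) al_le EE k2.
have gk_lb := gk_ge al1 mu0 m1 k2.
set n := (nk k.-1)%:R in PAk gk_lb; have n0 : 0 < n by rewrite ltr0n expn_gt0.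
set A := (mu * n + m) `^ alpha in PAk gk_lb.
have A0 : 0 < A by rewrite powR_gt0 // addr_gt0 ?mulr_gt0.
have T0 : 0 < 2 `^ alpha by rewrite powR_gt0.
have g0 : 0 < gk alpha mu m k.
  by apply: lt_le_trans gk_lb; rewrite -/C divr_gt0 // mulr_gt0.
rewrite ler_pdivrMr // mul1r; apply: le_trans gk_lb.
apply: le_trans (_ : 3 * (n * E / A) <= _); first by rewrite ler_pM2l.
rewrite ler_pdivlMr ?mulr_gt0 // (_ : 3 * (n * E / A) * _ = 3 * n * E * 2 `^ alpha).
  by rewrite -/C; nra.
by field; rewrite !gt_eqF.
Qed.
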